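(* Let $\mathcal{B}$ be a complete topological ring and let $\mathrm{e}=\sum_{i\in\mathbb{N}}\mathrm{e}_iT^i\colon\mathcal{B}\to\mathcal{B}\{T\}$ be a restricted exponential homomorphism. Then: (a) $\mathcal{B}^{\mathrm{e}}$ is a complete topological subring of $\mathcal{B}$. (b) For every $i\ge1$, $\mathrm{e}_i\colon\mathcal{B}\to\mathcal{B}$ is a homomorphism of topological $\mathcal{B}^{\mathrm{e}}$-modules. (c) If $\mathcal{B}$ admits a fundamental system $(\mathfrak{b}_n)_{n\in\mathbb{N}}$ of open ideals consisting of prime ideals of $\mathcal{B}$, then $\mathcal{B}^{\mathrm{e}}$ is factorially closed in $\mathcal{B}$; in particular every invertible element of $\mathcal{B}$ is contained in $\mathcal{B}^{\mathrm{e}}$.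
   Context: Conventions: topological rings are linearly topologized with a countable fundamental system of open ideals; homomorphisms are continuous; complete means the canonical map to $\varprojlim_{\mathfrak{a}}\mathcal{B}/\mathfrak{a}$ (open ideals, discrete quotients) is a topological isomorphism. $\mathcal{B}\{T\}$, $\mathcal{B}\{T,T'\}$ denote restricted power series over $\mathcal{B}$ (coefficients converging to $0$), topologized by the ideals of series with all coefficients in a given open ideal. A restricted exponential homomorphism is a continuous ring homomorphism $\mathrm{e}\colon\mathcal{B}\to\mathcal{B}\{T\}$, $\mathrm{e}(b)=\sum_i\mathrm{e}_i(b)T^i$, with $\mathrm{e}_0=\mathrm{id}_{\mathcal{B}}$ and $\sum_{i,j}\mathrm{e}_j(\mathrm{e}_i(b))T'^jT^i=\sum_\ell\mathrm{e}_\ell(b)(T+T')^\ell$ for all $b$. Its ring of invariants is $\mathcal{B}^{\mathrm{e}}=\{b\in\mathcal{B}:\mathrm{e}(b)=b\}$ (i.e. $b$ equals its image as a constant series), with the induced topology. A subring $R\subseteq\mathcal{B}$ is factorially closed if $b,b'\in\mathcal{B}$ and $bb'\in R\setminus\{0\}$ imply $b,b'\in R$. *)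

From mathcomp Require Import all_boot all_algebra.
Set Implicit Arguments. Unset Strict Implicit. Unset Printing Implicit Defensive.
Import GRing.Theory.
Local Open Scope ring_scope.

Section LinTop.
Variable B : comPzRingType.

Definition is_ideal (I : B -> Prop) : Prop :=
  I 0 /\ (forall x y, I x -> I y -> I (x + y)) /\ (forall r x, I x -> I (r * x)).

Definition is_prime_ideal (I : B -> Prop) : Prop :=
  is_ideal I /\ ~ I 1 /\ (forall x y, I (x * y) -> I x \/ I y).

Definition is_subring (S : B -> Prop) : Prop :=
  S 0 /\ S 1 /\ (forall x y, S x -> S y -> S (x - y)) /\
  (forall x y, S x -> S y -> S (x * y)).

(* A linear topology on B given by a countable (decreasing) fundamental
   system of open ideals a 0 ⊇ a 1 ⊇ ... *)
Definition linear_topology (a : nat -> B -> Prop) : Prop :=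
  (forall n, is_ideal (a n)) /\ (forall n x, a n.+1 x -> a n x).

(* The subset S (with induced topology, fundamental system a n ∩ S) is
   complete: the canonical map S -> lim_n S/(a n ∩ S) is bijective, i.e.
   separated, and every compatible family (x n), x (n+1) ≡ x n mod a n,
   has a limit b ∈ S with b ≡ x n mod a n for all n. *)
Definition complete_in (a : nat -> B -> Prop) (S : B -> Prop) : Prop :=
  (forall b, S b -> (forall n, a n b) -> b = 0) /\
  (forall x : nat -> B, (forall n, S (x n)) -> (forall n, a n (x n.+1 - x n)) ->
     exists b, S b /\ forall n, a n (b - x n)).

Definition complete (a : nat -> B -> Prop) : Prop := complete_in a (fun _ => True).

(* e = sum_i e_i T^i : B -> B{T} is a restricted exponential homomorphism
   (everything written coefficientwise). *)
Definition is_restricted_exp_hom (a : nat -> B -> Prop) (e : nat -> B -> B) : Prop :=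
  (forall b, e 0%N b = b) /\
  (* e is a ring homomorphism B -> B{T} (product = Cauchy product) *)
  (forall i b b', e i (b + b') = e i b + e i b') /\
  (forall i, e i 1 = (i == 0%N)%:R) /\
  (forall i b b', e i (b * b') = \sum_(j < i.+1) e j b * e (i - j)%N b') /\
  (* e(b) is a restricted power series: coefficients tend to 0 *)
  (forall b n, exists N, forall i, (N <= i)%N -> a n (e i b)) /\
  (* continuity for the topology of B{T} *)
  (forall n, exists m, forall b, a m b -> forall i, a n (e i b)) /\
  (* exponential law: coefficient of T'^j T^i *)
  (forall i j b, e j (e i b) = ('C(i + j, i))%:R * e (i + j)%N b).

(* Ring of invariants B^e = {b | e(b) = b} *)
Definition invariants (e : nat -> B -> B) (b : B) : Prop :=
  forall i, (0 < i)%N -> e i b = 0.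

Definition factorially_closed (R : B -> Prop) : Prop :=
  forall b b', R (b * b') -> b * b' <> 0 -> R b /\ R b'.

End LinTop.

(** Parts (a) and (b) are formal: each [e_i] is additive, the product rule
    [e_i (r b) = sum_j e_j r e_(i-j) b] together with [e_0 = id] makes [e_i]
    linear over the invariants, and invariance passes to limits because the
    [e_i] are uniformly continuous.

    For (c), reduce modulo an open prime ideal [P]: since [e(b)] and [e(b')]
    are restricted series and [P] is open, their reductions are polynomials
    over the domain [B/P], and their product [e(b b') = b b'] is a constant
    that is nonzero mod [P]. Comparing top coefficients, both reductions are
    constant, i.e. [e_i b] lies in [P] for [i > 0]. As the primes form a
    fundamental system, [e_i b] lies in every open ideal, hence vanishes. *)

From mathcomp Require Import boolp.
From mathcomp Require Import all_boot all_algebra.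
Set Implicit Arguments. Unset Strict Implicit. Unset Printing Implicit Defensive.
Local Open Scope ring_scope.
Import GRing.Theory.

Lemma last_counterexample (R : nat -> Prop) N i :
  (forall j, (N <= j)%N -> R j) -> ~ R i ->
  exists d, [/\ ~ R d, (i <= d)%N & forall j, (d < j)%N -> R j].
Proof.
move=> RN Ri.
pose q j := `[< ~ R j >].
have q_i : q i by apply: asboolT.
have q_bounded j : q j -> (j <= N)%N.
  by move=> /asboolP Rj; case: (leqP N j) => [/RN /Rj | /ltnW].
case: (ex_maxnP (ex_intro q i q_i) q_bounded) => d /asboolP Rd d_max.
exists d; split=> [//||j dj]; first exact: d_max.
by apply: contrapT => /asboolT /d_max; rewrite leqNgt dj.
Qed.

Lemma open_ideal_antimono (B : comPzRingType) (a : nat -> B -> Prop) m n x :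
  (forall n x, a n.+1 x -> a n x) -> (m <= n)%N -> a n x -> a m x.
Proof.
move=> a_dec; elim: n => [|n IH]; first by rewrite leqn0 => /eqP ->.
by rewrite leq_eqVlt ltnS => /orP[/eqP -> // | mn /a_dec]; apply: IH.
Qed.

Section Ideal.
Variables (B : comPzRingType) (I : B -> Prop).
Hypothesis I_ideal : is_ideal I.

Lemma idealN x : I x -> I (- x).
Proof. by case: I_ideal => _ [_ IM] Ix; rewrite -mulN1r; apply: IM. Qed.

Lemma ideal_sum (J : finType) (r : pred J) (F : J -> B) :
  (forall j, r j -> I (F j)) -> I (\sum_(j | r j) F j).
Proof. by case: I_ideal => I0 [ID _]; apply: big_ind. Qed.

End Ideal.

Lemma subring_factorially_closed_unit (B : comPzRingType) (R : B -> Prop) b c :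
  is_subring R -> factorially_closed R -> b * c = 1 -> R b.
Proof.
move=> [R0 [R1 _]] R_fact bc1; have [one0 | one_neq0] := eqVneq (1 : B) 0.
  by rewrite -[b]mulr1 one0 mulr0.
by case: (R_fact b c); rewrite ?bc1 //; apply/eqP.
Qed.

Section PrimeIdeal.
Variables (B : comPzRingType) (P : B -> Prop).
Hypothesis P_prime : is_prime_ideal P.
Let P_ideal : is_ideal P := proj1 P_prime.

(** Modulo [P], the top coefficient of a Cauchy product is the product of
    the top coefficients. *)
Lemma cauchy_top_coef_notin (f g : nat -> B) d d' :
  ~ P (f d) -> ~ P (g d') ->
  (forall j, (d < j)%N -> P (f j)) -> (forall j, (d' < j)%N -> P (g j)) ->
  ~ P (\sum_(j < (d + d').+1) f j * g (d + d' - j)%N).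
Proof.
case: P_prime => -[_ [PD PM]] [_ P_mul] fd gd' f_top g_top P_sum.
have dk : (d < (d + d').+1)%N by rewrite ltnS leq_addr.
move: P_sum; rewrite (bigD1 (Ordinal dk)) //= addKn.
set rest := (\sum_(j < _ | _) _) => P_sum.
have P_rest : P rest.
  apply: (ideal_sum P_ideal) => -[j /= jk] /eqP jd.
  case: (ltngtP d j) => [dj | jd' | dj]; last by case: jd; apply: val_inj.
  - by rewrite mulrC; apply/PM/f_top.
  - by apply/PM/g_top; rewrite ltn_subRL ltn_add2r.
have : P (f d * g d').
  by rewrite -[_ * _]addr0 -(subrr rest) addrA; apply/PD/(idealN P_ideal).
by case/P_mul.
Qed.

Lemma cauchy_const_coef_in (f g : nat -> B) N :
  (forall j, (N <= j)%N -> P (f j)) -> (forall j, (N <= j)%N -> P (g j)) ->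
  ~ P (g 0%N) -> (forall k, (0 < k)%N -> P (\sum_(j < k.+1) f j * g (k - j)%N)) ->
  forall i, (0 < i)%N -> P (f i).
Proof.
move=> fN gN g0 P_coef i i_gt0; apply: contrapT => fi.
have [d [fd id f_top]] := last_counterexample fN fi.
have [d' [gd' _ g_top]] := last_counterexample gN g0.
apply: (cauchy_top_coef_notin fd gd' f_top g_top); apply: P_coef.
by rewrite addn_gt0 (leq_trans i_gt0 id).
Qed.

End PrimeIdeal.

Section ExpCoefficients.
Variables (B : comPzRingType) (a : nat -> B -> Prop) (e : nat -> B -> B).
Hypothesis ecoef0_id : forall b, e 0%N b = b.
Hypothesis ecoefD : forall i b b', e i (b + b') = e i b + e i b'.
Hypothesis ecoef1 : forall i, e i 1 = (i == 0%N)%:R.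
Hypothesis ecoefM :
  forall i b b', e i (b * b') = \sum_(j < i.+1) e j b * e (i - j)%N b'.
Hypothesis ecoef_restricted : forall b n, exists N, forall i, (N <= i)%N -> a n (e i b).
Hypothesis ecoef_continuous : forall n, exists m, forall b, a m b -> forall i, a n (e i b).

Lemma ecoef_0 i : e i 0 = 0.
Proof. by apply: (@addrI _ (e i 0)); rewrite -ecoefD !addr0. Qed.

Lemma ecoefN i x : e i (- x) = - e i x.
Proof. by apply/eqP; rewrite -subr_eq0 opprK -ecoefD addNr ecoef_0. Qed.

Lemma ecoefB i x y : e i (x - y) = e i x - e i y.
Proof. by rewrite ecoefD ecoefN. Qed.

Lemma ecoefMl_invariant i r b : invariants e r -> e i (r * b) = r * e i b.
Proof.
move=> r_inv; rewrite ecoefM big_ord_recl ecoef0_id subn0 big1 ?addr0 // => j _.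
by rewrite r_inv // mul0r.
Qed.

Lemma invariants_subring : is_subring (invariants e).
Proof.
split; first by move=> i _; apply: ecoef_0.
split; first by case=> // i _; rewrite ecoef1.
by split=> x y x_inv y_inv i i_gt0;
  rewrite ?ecoefB ?ecoefMl_invariant // y_inv // ?x_inv // (subr0, mulr0).
Qed.

Lemma invariants_complete : complete a -> complete_in a (invariants e).
Proof.
move=> [sep cpl]; split=> [b _ | x x_inv x_cauchy]; first exact: sep.
have [b [_ xb]] := cpl x (fun=> I) x_cauchy.
exists b; split=> // i i_gt0; apply: sep => // n.
have [m Hm] := ecoef_continuous n.
by have := Hm _ (xb m) i; rewrite ecoefB x_inv // subr0.
Qed.

Lemma invariant_factor_ecoef_in_prime (P : B -> Prop) m b b' :
  is_prime_ideal P -> (forall x, a m x -> P x) ->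
  invariants e (b * b') -> ~ P (b * b') ->
  forall i, (0 < i)%N -> P (e i b).
Proof.
move=> P_prime aP bb'_inv bb'P.
have [N1 bN1] := ecoef_restricted b m.
have [N2 b'N2] := ecoef_restricted b' m.
apply: (@cauchy_const_coef_in _ P P_prime _ (e ^~ b') (maxn N1 N2)).
- by move=> j; rewrite geq_max => /andP[/bN1/aP].
- by move=> j; rewrite geq_max => /andP[_ /b'N2/aP].
- by rewrite ecoef0_id => P_b'; apply: bb'P; case: P_prime => -[_ [_ PM]] _; apply: PM.
- by move=> k k_gt0; rewrite -ecoefM bb'_inv //; case: P_prime => -[].
Qed.

Lemma invariants_factorially_closed_l (p : nat -> B -> Prop) b b' :
  (forall n x, a n.+1 x -> a n x) -> (forall x, (forall n, a n x) -> x = 0) ->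
  (forall n, is_prime_ideal (p n)) ->
  (forall n, exists m, forall x, a m x -> p n x) ->
  (forall n, exists m, forall x, p m x -> a n x) ->
  invariants e (b * b') -> b * b' <> 0 -> invariants e b.
Proof.
move=> a_dec sep p_prime a_p p_a bb'_inv bb'_neq0.
have [k0 bb'k0] : exists k0, ~ a k0 (b * b').
  by apply/existsNP => bb'a; apply/bb'_neq0/sep.
move=> i i_gt0; apply: sep => // k.
have [m p_a_m] := p_a (maxn k k0).
have [m' a_p_m'] := a_p m.
have bb'p : ~ p m (b * b').
  by move=> /p_a_m; apply/contra_not: bb'k0; apply: open_ideal_antimono; rewrite ?leq_maxr.
have := invariant_factor_ecoef_in_prime (p_prime m) a_p_m' bb'_inv bb'p i_gt0.
by move=> /p_a_m; apply: open_ideal_antimono; rewrite ?leq_maxl.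
Qed.

End ExpCoefficients.

Theorem proposition2p3 (B : comPzRingType) (a : nat -> B -> Prop) (e : nat -> B -> B) :
  linear_topology a -> complete a -> is_restricted_exp_hom a e ->
  (* (a) *)
  (is_subring (invariants e) /\ complete_in a (invariants e)) /\
  (* (b) *)
  (forall i, (0 < i)%N ->
     (forall b b', e i (b + b') = e i b + e i b') /\
     (forall r b, invariants e r -> e i (r * b) = r * e i b) /\
     (forall n, exists m, forall b, a m b -> a n (e i b))) /\
  (* (c) *)
  ((exists p : nat -> B -> Prop,
      (forall n, is_prime_ideal (p n)) /\
      (forall n, exists m, forall x, a m x -> p n x) /\
      (forall n, exists m, forall x, p m x -> a n x)) ->
   factorially_closed (invariants e) /\
   (forall b, (exists c, b * c = 1) -> invariants e b)).
Proof.
move=> [_ a_dec] a_cpl [e0 [eD [e1 [eM [e_res [e_cont _]]]]]].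
have inv_ring := invariants_subring e0 eD e1 eM.
split; first by split; last exact: invariants_complete.
split.
  move=> i _; split=> //; split; first exact: ecoefMl_invariant.
  by move=> n; have [m Hm] := e_cont n; exists m => b /Hm.
move=> [p [p_prime [a_p p_a]]].
have fact_l := invariants_factorially_closed_l e0 eM e_res a_dec
  (fun x => a_cpl.1 x I) p_prime a_p p_a.
have fact : factorially_closed (invariants e).
  by move=> b b' bb'_inv bb'_neq0; split; last rewrite mulrC in bb'_inv bb'_neq0;
    exact: fact_l bb'_inv bb'_neq0.
by split=> // b [c]; apply: subring_factorially_closed_unit.
Qed.
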